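(* Let $R$ be a $*$-ring. The following are equivalent: (1) $R$ is $*$-clean and $2\in U(R)$; (2) every element of $R$ is a sum of a unit and an element $t$ with $t^2=1$ and $t^*=t$.
   Context: A $*$-ring is a ring with identity with an involution $*$. A projection is $p$ with $p^2=p=p^*$. $R$ is $*$-clean if every element is a sum of a projection and a unit. $U(R)$ is the unit group. *)

From mathcomp Require Import all_boot all_algebra.
Set Implicit Arguments. Unset Strict Implicit. Unset Printing Implicit Defensive.
Import GRing.Theory.
Local Open Scope ring_scope.

Definition is_involution (R : ringType) (star : R -> R) : Prop :=
  [/\ (forall x y, star (x + y) = star x + star y),
      (forall x y, star (x * y) = star y * star x) &
      (forall x, star (star x) = x)].

Definition is_projection (R : ringType) (star : R -> R) (p : R) : Prop :=
  p * p = p /\ star p = p.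

Definition star_clean (R : unitRingType) (star : R -> R) : Prop :=
  forall a : R, exists p u : R, is_projection star p /\ u \is a GRing.unit /\ a = p + u.

From mathcomp Require Import all_boot all_algebra.
Set Implicit Arguments. Unset Strict Implicit. Unset Printing Implicit Defensive.
Import GRing.Theory.
Local Open Scope ring_scope.

(* When 2 is invertible, p |-> 2p - 1 is a bijection from projections onto
   self-adjoint square roots of 1, with inverse t |-> (1 + t)/2.  Hence
   (a + 1)/2 = p + u gives a = (2p - 1) + 2u, and 2a - 1 = t + u gives
   a = (1 + t)/2 + u/2.  Conversely, writing 1 = u + t forces
   u (1 + t) = (1 - t)(1 + t) = 0, so t = -1 and the unit u equals 2. *)

Definition is_symmetry (R : ringType) (star : R -> R) (t : R) : Prop :=
  t * t = 1 /\ star t = t.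

Section Involution.
Variables (R : unitRingType) (star : R -> R).
Hypothesis Hstar : is_involution star.

Lemma starD x y : star (x + y) = star x + star y.
Proof. by case: Hstar. Qed.

Lemma starM x y : star (x * y) = star y * star x.
Proof. by case: Hstar. Qed.

Lemma starK x : star (star x) = x.
Proof. by case: Hstar. Qed.

Lemma star0 : star 0 = 0.
Proof.
have := starD 0 0; rewrite addr0 => /eqP.
by rewrite -subr_eq subrr eq_sym => /eqP.
Qed.

Lemma starN x : star (- x) = - star x.
Proof. by apply/eqP; rewrite -subr_eq0 opprK -starD addNr star0. Qed.

Lemma starB x y : star (x - y) = star x - star y.
Proof. by rewrite starD starN. Qed.

Lemma star1 : star 1 = 1.
Proof.
by have := starM (star 1) 1; rewrite !mulr1 starK mulr1.
Qed.

Lemma star_natr n : star n%:R = n%:R.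
Proof.
elim: n => [|n IHn]; first exact: star0.
by rewrite -natr1 starD IHn star1.
Qed.

Lemma star_natrM n x : star (n%:R * x) = n%:R * star x.
Proof. by rewrite starM star_natr -commr_nat. Qed.

Lemma starV x : x \is a GRing.unit -> star x^-1 = (star x)^-1.
Proof.
move=> Ux.
have starxV : star x * star x^-1 = 1.
  by rewrite -starM mulVr // star1.
have Ustarx : star x \is a GRing.unit.
  apply/unitrP; exists (star x^-1); split=> //.
  by rewrite -starM divrr // star1.
by apply: (mulrI Ustarx); rewrite starxV divrr.
Qed.

Lemma projection_symmetry p :
  is_projection star p -> is_symmetry star (2%:R * p - 1).
Proof.
case=> pp sp; split.
- have sq2p : (2%:R * p) * (2%:R * p) = 2%:R * p + 2%:R * p.
    by rewrite -mulrA [p * _]mulrA (commr_nat p 2) -mulrA pp mulr_natl mulr2n.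
  by rewrite mulrBl !mulrBr sq2p !mulr1 mul1r opprB addrK addrC subrK.
- by rewrite starB star_natrM sp star1.
Qed.

Lemma symmetry_projection t :
  (2%:R : R) \is a GRing.unit -> is_symmetry star t ->
  is_projection star (2%:R^-1 * (1 + t)).
Proof.
move=> U2 [tt st].
have sq1t : (1 + t) * (1 + t) = 2%:R * (1 + t).
  by rewrite mulrDr !mulrDl !mul1r mulr1 tt [t + 1]addrC.
have V2C (x : R) : x * 2%:R^-1 = 2%:R^-1 * x by rewrite (commrV (commr_nat x 2)).
split.
- by rewrite -mulrA [(1 + t) * _]mulrA V2C -mulrA sq1t [2%:R^-1 * (2%:R * _)]mulrA
    mulVr // mul1r.
- by rewrite starM starV // star_natr starD
    star1 st V2C.
Qed.

End Involution.

Lemma unit_natrM (R : unitRingType) n (x : R) :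
  (n%:R : R) \is a GRing.unit -> x \is a GRing.unit -> n%:R * x \is a GRing.unit.
Proof. by move=> Un Ux; rewrite unitrM_comm ?Un //; apply/esym/commr_nat. Qed.

Lemma eq2_of_unit_add_sqrt1_eq1 (R : unitRingType) (u t : R) :
  u \is a GRing.unit -> t * t = 1 -> u + t = 1 -> u = 2%:R.
Proof.
move=> Uu tt ut1.
have def_u : u = 1 - t by rewrite -ut1 addrK.
have : u * (1 + t) = 0.
  by rewrite def_u mulrBl mul1r mulrDr mulr1 tt [t + 1]addrC subrr.
move/(congr1 (fun x => u^-1 * x)); rewrite mulr0 mulrA mulVr // mul1r.
by move/eqP; rewrite addr_eq0 => /eqP def_t; rewrite def_u -[t]opprK -def_t opprK.
Qed.

Section Decompositions.
Variables (R : unitRingType) (star : R -> R).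
Hypothesis Hstar : is_involution star.
Hypothesis unit2 : (2%:R : R) \is a GRing.unit.

Let mul2K (x : R) : 2%:R * (2%:R^-1 * x) = x.
Proof. by rewrite mulrA divrr // mul1r. Qed.

Lemma star_clean_symmetry_decomposition :
  star_clean star ->
  forall a : R, exists t u, is_symmetry star t /\ u \is a GRing.unit /\ a = u + t.
Proof.
move=> clean a.
have [p [u [proj_p [Uu def_a]]]] := clean (2%:R^-1 * (a + 1)).
exists (2%:R * p - 1), (2%:R * u); split; last split.
- exact: projection_symmetry.
- exact: unit_natrM.
- have := mul2K (a + 1); rewrite def_a mulrDr => /(congr1 (fun x => x - 1)).
  by rewrite addrK => <-; rewrite addrA [2%:R * u + _]addrC.
Qed.

Lemma symmetry_decomposition_star_clean :
  (forall a : R, exists t u, is_symmetry star t /\ u \is a GRing.unit /\ a = u + t) ->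
  star_clean star.
Proof.
move=> decomp a.
have [t [u [sym_t [Uu def_a]]]] := decomp (2%:R * a - 1).
exists (2%:R^-1 * (1 + t)), (2%:R^-1 * u); split; last split.
- exact: symmetry_projection.
- by rewrite unitrM_comm ?unitrV ?unit2 //; apply/esym/commrV/commr_nat.
- apply: (mulrI unit2); rewrite mulrDr !mul2K.
  by rewrite -addrA [t + u]addrC -def_a addrC subrK.
Qed.

End Decompositions.

Theorem theorem2p5 (R : unitRingType) (star : R -> R) (Hstar : is_involution star) :
  (star_clean star /\ (2%:R : R) \is a GRing.unit) <->
  (forall a : R, exists t u : R,
      t * t = 1 /\ star t = t /\ u \is a GRing.unit /\ a = u + t).
Proof.
split.
- case=> clean unit2 a.
  have [t [u [[tt st] [Uu def_a]]]] :=
    star_clean_symmetry_decomposition Hstar unit2 clean a.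
  by exists t, u.
- move=> decomp.
  have decomp' a : exists t u,
      is_symmetry star t /\ u \is a GRing.unit /\ a = u + t.
    by have [t [u [tt [st [Uu def_a]]]]] := decomp a; exists t, u.
  have [t [u [[tt _] [Uu def_1]]]] := decomp' 1.
  have unit2 : (2%:R : R) \is a GRing.unit.
    by rewrite -(eq2_of_unit_add_sqrt1_eq1 Uu tt (esym def_1)).
  split=> //; exact: symmetry_decomposition_star_clean.
Qed.
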